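(* Let $G$ be an AT-free graph. Then $\operatorname{tw}(G)\le 3\Delta(G)-2$, where $\Delta(G)$ is the maximum degree of $G$.
   Context: An asteroidal triple in $G$ is an independent set of three vertices such that each pair is joined by a path avoiding the (closed) neighborhood of the third; $G$ is AT-free if it has no asteroidal triple. The treewidth $\operatorname{tw}(G)$ is the minimum, over all tree decompositions $(\{X_i\},T)$ of $G$ (a tree $T$ with vertex subsets $X_i$ at its nodes covering all vertices and all edges, such that for each vertex the nodes containing it form a connected subtree), of $\max_i|X_i|-1$. *)

From mathcomp Require Import all_boot.
Set Implicit Arguments. Unset Strict Implicit. Unset Printing Implicit Defensive.

Section Graphs.
Variable V : finType.

Definition simple_graph (e : rel V) : Prop := symmetric e /\ irreflexive e.

Definition closed_nbhd (e : rel V) (z : V) : {set V} := [set w | (w == z) || e z w].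

Definition path_avoiding (e : rel V) (S : {set V}) (x y : V) : Prop :=
  x \notin S /\ y \notin S /\
  connect [rel a b | [&& e a b, a \notin S & b \notin S]] x y.

Definition independent3 (e : rel V) (x y z : V) : Prop :=
  [/\ x != y, y != z, x != z & [/\ ~~ e x y, ~~ e y z & ~~ e x z]].

Definition asteroidal_triple (e : rel V) (x y z : V) : Prop :=
  [/\ independent3 e x y z,
      path_avoiding e (closed_nbhd e z) x y,
      path_avoiding e (closed_nbhd e x) y z &
      path_avoiding e (closed_nbhd e y) x z].

Definition AT_free (e : rel V) : Prop :=
  forall x y z, ~ asteroidal_triple e x y z.

Definition max_degree (e : rel V) : nat := \max_(v : V) #|[set w | e v w]|.

End Graphs.

Section Trees.
Variable I : finType.

Definition has_cycle (t : rel I) : Prop :=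
  exists c : seq I, [/\ 2 < size c, uniq c & cycle t c].

Definition is_tree (t : rel I) : Prop :=
  [/\ simple_graph t, 0 < #|I|, (forall i j, connect t i j) & ~ has_cycle t].
End Trees.

Definition tree_decomposition (V I : finType) (e : rel V) (t : rel I)
    (B : I -> {set V}) : Prop :=
  [/\ is_tree t,
      (forall v : V, exists i, v \in B i),
      (forall u v : V, e u v -> exists i, (u \in B i) && (v \in B i)) &
      (forall (v : V) (i j : I), v \in B i -> v \in B j ->
         connect [rel a b | [&& t a b, v \in B a & v \in B b]] i j)].

Definition td_width (V I : finType) (B : I -> {set V}) : nat :=
  (\max_(i : I) #|B i|) - 1.

Definition treewidth_le (V : finType) (e : rel V) (k : nat) : Prop :=
  exists (I : finType) (t : rel I) (B : I -> {set V}),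
    tree_decomposition e t B /\ td_width B <= k.

From mathcomp Require Import all_boot zify.
Set Implicit Arguments. Unset Strict Implicit. Unset Printing Implicit Defensive.

(* Every connected component of an AT-free graph has a dominating pair x, y:
   no vertex w admits an x-y path avoiding N[w].  Hence a shortest x-y path
   s_0 ... s_k meets the closed neighbourhood of every vertex of the component,
   and the bags B_i = N[s_i] u N[s_(i+1)] u N[s_(i+2)] cover it.  Because the
   path is geodesic, a vertex lies in N[s_i] only for i in a window of three
   consecutive indices, which makes the bags convex, and the ends of an edge lie
   in neighbourhoods N[s_i], N[s_j] with |i - j| <= 3; when |i - j| = 3 either
   they share a bag or s_i, s_(i+2) and the far end form an asteroidal triple.
   Adjacent vertices share two closed neighbours, so |B_i| <= 3 (D + 1) - 4
   for the maximum degree D.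
   Concatenating the path decompositions of the components gives a path, hence
   a tree, decomposition of width 3 D - 2. *)

Lemma last_take (T : Type) (x : T) p i :
  i <= size p -> last x (take i p) = nth x (x :: p) i.
Proof.
by move=> le_ip; rewrite (last_nth x) size_takel // -[x :: _]/(take i.+1 (x :: p)) nth_take.
Qed.

Section Walks.
Variables (T : finType) (e : rel T).

Definition walk_within (L : nat) (a b : T) :=
  exists q, [/\ path e a q, last a q = b & size q <= L].

Lemma walk_within1 a b : e a b -> walk_within 1 a b.
Proof. by exists [:: b]; rewrite /= andbT. Qed.

Lemma walk_within_trans L1 L2 a b c :
  walk_within L1 a b -> walk_within L2 b c -> walk_within (L1 + L2) a c.
Proof.
case=> q1 [p1 <- s1] [q2 [p2 <- s2]]; exists (q1 ++ q2).
by rewrite cat_path p1 p2 last_cat size_cat leq_add.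
Qed.

Definition shortest (x : T) (p : seq T) :=
  forall q, path e x q -> last x q = last x p -> size p <= size q.

Lemma shortest_path_exists x y : connect e x y ->
  exists p, [/\ path e x p, last x p = y & shortest x p].
Proof.
move=> /connectP [q0 q0_path q0_last].
pose has_walk n := [exists t : n.-tuple T, path e x t && (last x t == y)].
have has_walkP q : path e x q -> last x q = y -> has_walk (size q).
  by move=> q_path q_last; apply/existsP; exists (in_tuple q); rewrite q_path q_last eqxx.
case: (ex_minnP (ex_intro has_walk _ (has_walkP q0 q0_path (esym q0_last)))).
move=> n /existsP [t /andP [t_path /eqP t_last]] t_min.
exists t; split=> // q q_path; rewrite t_last size_tuple => q_last.
exact/t_min/has_walkP.
Qed.

Lemma shortest_geodesic x p i j L : path e x p -> shortest x p ->
  i <= size p -> j <= size p ->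
  walk_within L (nth x (x :: p) i) (nth x (x :: p) j) -> j <= i + L.
Proof.
move=> p_path p_min le_ip le_jp [q [q_path q_last le_qL]].
have suffix_path : path e (nth x (x :: p) j) (drop j p).
  by move: p_path; rewrite -{1}(cat_take_drop j p) cat_path last_take // => /andP[].
have := p_min (take i p ++ q ++ drop j p).
rewrite !cat_path take_path // last_take // q_path q_last suffix_path.
rewrite !last_cat last_take // q_last -last_take // -last_cat cat_take_drop.
rewrite !size_cat size_take size_drop => /(_ isT erefl).
case: ltnP; lia.
Qed.
End Walks.

Section PathDecompositions.
Variables (V : finType) (e : rel V).

Definition path_decomposition (U : {set V}) (k : nat) (bs : seq {set V}) :=
  [/\ (forall i, nth set0 bs i \subset U),
      (forall v, v \in U -> exists2 i, i < size bs & v \in nth set0 bs i),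
      (forall u v, u \in U -> e u v ->
         exists2 i, i < size bs & (u \in nth set0 bs i) && (v \in nth set0 bs i)),
      (forall v a b c, a <= b <= c -> v \in nth set0 bs a -> v \in nth set0 bs c ->
         v \in nth set0 bs b) &
      (forall i, #|nth set0 bs i| <= k)].

Lemma path_decomposition0 k : path_decomposition set0 k [::].
Proof. by split=> [i|v|u v|v a b c _|i]; rewrite ?nth_nil ?inE ?sub0set ?cards0. Qed.

Lemma path_decompositionU (U1 U2 : {set V}) k bs1 bs2 : [disjoint U1 & U2] ->
  path_decomposition U1 k bs1 -> path_decomposition U2 k bs2 ->
  path_decomposition (U1 :|: U2) k (bs1 ++ bs2).
Proof.
move=> U12 [sub1 cover1 edge1 conv1 card1] [sub2 cover2 edge2 conv2 card2].
have nth_right i : nth set0 (bs1 ++ bs2) (size bs1 + i) = nth set0 bs2 i.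
  by rewrite nth_cat ltnNge leq_addr addKn.
split.
- move=> i; rewrite nth_cat; case: ifP => _.
    exact: subset_trans (sub1 i) (subsetUl _ _).
  exact: subset_trans (sub2 _) (subsetUr _ _).
- move=> v /setUP [/cover1 [i lt_i v_i] | /cover2 [i lt_i v_i]].
    by exists i; rewrite ?nth_cat ?size_cat ?lt_i //; lia.
  by exists (size bs1 + i); rewrite ?nth_right ?size_cat ?ltn_add2l.
- move=> u v /setUP [/edge1 uv1 /uv1 [i lt_i uv_i] | /edge2 uv2 /uv2 [i lt_i uv_i]].
    by exists i; rewrite ?nth_cat ?size_cat ?lt_i //; lia.
  by exists (size bs1 + i); rewrite ?nth_right ?size_cat ?ltn_add2l.
- move=> v a b c le_abc; rewrite !nth_cat.
  case: (ltnP a (size bs1)) => lt_a; case: (ltnP c (size bs1)) => lt_c.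
  + by rewrite (_ : b < size bs1); [exact: conv1 | lia].
  + move=> /(subsetP (sub1 _)) v1 /(subsetP (sub2 _)) v2.
    by move: (disjointFr U12 v1); rewrite v2.
  + lia.
  + rewrite (_ : b < size bs1 = false); last lia.
    by apply: conv2; lia.
- by move=> i; rewrite nth_cat; case: ifP.
Qed.

Hypothesis connect_e_sym : connect_sym e.

Lemma path_decomposition_components k :
  (forall r, exists bs, path_decomposition [set v | connect e r v] k bs) ->
  exists bs, path_decomposition [set: V] k bs.
Proof.
move=> comp_pd.
suff closed_pd (U : {set V}) : {in U, forall u v, connect e u v -> v \in U} ->
    exists bs, path_decomposition U k bs.
  by apply: closed_pd => u _ v _; rewrite inE.
elim: #|U| {-2}U (leqnn #|U|) => [|n IH] {}U cardU U_closed.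
  by move: cardU; rewrite leqn0 cards_eq0 => /eqP ->; exists [::]; apply: path_decomposition0.
have [-> | [r r_U]] := set_0Vmem U; first by exists [::]; apply: path_decomposition0.
pose C := [set v | connect e r v].
have C_U : C \subset U by apply/subsetP => v; rewrite inE; apply: U_closed.
have [bsC pdC] := comp_pd r.
have [bs' pd'] : exists bs, path_decomposition (U :\: C) k bs.
  apply: IH.
    have C_gt0 : 0 < #|C| by apply/card_gt0P; exists r; rewrite inE connect0.
    have := subset_leq_card C_U; rewrite cardsD (setIidPr C_U); lia.
  move=> u /setDP [u_U u_C] v uv; rewrite !inE (U_closed u) // andbT.
  apply: contraNN u_C; rewrite !inE => r_v.
  by apply: connect_trans r_v _; rewrite connect_e_sym.
exists (bsC ++ bs'); rewrite -(setID U C) (setIidPr C_U).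
by apply: path_decompositionU; rewrite // -setI_eq0 setDE setICA setICr setI0.
Qed.
End PathDecompositions.

Section PathGraph.
Variable n : nat.

Definition path_rel : rel 'I_n := fun i j => (i.+1 == j :> nat) || (j.+1 == i :> nat).

Lemma path_rel_sym : symmetric path_rel.
Proof. by move=> i j; rewrite /path_rel orbC. Qed.

Lemma path_rel_irrefl : irreflexive path_rel.
Proof. by move=> i; rewrite /path_rel orbb; lia. Qed.

Lemma connect_path_rel_interval (P : pred 'I_n) (i j : 'I_n) :
  (forall m : 'I_n, minn i j <= m <= maxn i j -> P m) ->
  connect [rel a b | [&& path_rel a b, P a & P b]] i j.
Proof.
have R_sym : connect_sym [rel a b | [&& path_rel a b, P a & P b]].
  by apply: sym_connect_sym => a b /=; rewrite path_rel_sym (andbC (P a)).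
wlog le_ij : i j / i <= j.
  move=> IH Pij; case: (leqP i j) => [|/ltnW] le; first exact: IH.
  by rewrite R_sym; apply: IH => // m; rewrite minnC maxnC; apply: Pij.
rewrite (minn_idPl le_ij) (maxn_idPr le_ij).
have [k def_j] : exists k, (j : nat) = i + k by exists (j - i); rewrite subnKC.
elim: k j def_j {le_ij} => [|k IH] j def_j Pij.
  by rewrite (_ : j = i) ?connect0 //; apply: val_inj; rewrite /= def_j addn0.
have lt_ikn : i + k < n by have := ltn_ord j; lia.
apply: connect_trans (IH (Ordinal lt_ikn) erefl _) (connect1 _).
  by move=> m /andP [le_im /= le_mk]; apply: Pij; rewrite le_im /=; lia.
by rewrite /= /path_rel /= def_j addnS eqxx !Pij //=; lia.
Qed.

Lemma path_rel_acyclic : ~ has_cycle path_rel.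
Proof.
case=> c [size_c uniq_c cycle_c].
have [m m_c m_max] : exists2 m, m \in c & forall i, i \in c -> (i : nat) <= m.
  case: c size_c {uniq_c cycle_c} => // i0 c _.
  by case: (arg_maxnP (fun i : 'I_n => val i) (mem_head i0 c)) => m; exists m.
case: (rot_to m_c) => k s rot_c.
have {}m_max i : i \in m :: s -> (i : nat) <= m by rewrite -rot_c mem_rot; apply: m_max.
move: cycle_c uniq_c size_c; rewrite -(rot_cycle k) -(rot_uniq k) -(size_rot k) rot_c.
case: s {rot_c} m_max => [|a [|b t]] // m_max.
have below j : j \in [:: m, a, b & t] -> path_rel m j || path_rel j m -> j.+1 = m :> nat.
  by move=> /m_max; rewrite /path_rel; lia.
rewrite /= rcons_path => /and3P [m_a _ /andP [_ l_m]] /and4P [_ a_t _ _] _.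
have a_last : a = last b t.
  have last_in : last b t \in [:: m, a, b & t] by do 2!apply: mem_behead; apply: mem_last.
  apply: ord_inj; have := below a; have := below _ last_in.
  by rewrite !inE eqxx m_a l_m !orbT /=; lia.
by move: a_t; rewrite a_last mem_last.
Qed.
End PathGraph.

Lemma path_rel_tree n : 0 < n -> is_tree (@path_rel n).
Proof.
move=> n_gt0; split; rewrite ?card_ord //.
- by split; [apply: path_rel_sym | apply: path_rel_irrefl].
- move=> i j; apply: (connect_sub (e := [rel a b | [&& path_rel a b, predT a & predT b]])).
    by move=> a b /andP [ab _]; apply: connect1.
  exact: connect_path_rel_interval.
- exact: path_rel_acyclic.
Qed.

Lemma path_decomposition_treewidth (V : finType) (e : rel V) k (bs : seq {set V}) :
  0 < size bs -> path_decomposition e [set: V] k bs -> treewidth_le e (k - 1).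
Proof.
move=> bs_gt0 [_ cover edge conv card].
exists ('I_(size bs) : finType), (@path_rel _), (fun i : 'I_(size bs) => nth set0 bs i).
split; last first.
  by rewrite /td_width leq_sub2r //; apply/bigmax_leqP => i _; apply: card.
split.
- exact: path_rel_tree.
- by move=> v; have [i lt_i v_i] := cover v (in_setT v); exists (Ordinal lt_i).
- by move=> u v uv; have [i lt_i uv_i] := edge u v (in_setT u) uv; exists (Ordinal lt_i).
- move=> v i j v_i v_j; apply: connect_path_rel_interval => m le_m.
  by apply: (conv v (minn i j) m (maxn i j)); rewrite // /minn /maxn; case: ifP.
Qed.

Section SimpleGraphs.
Variables (V : finType) (e : rel V).
Hypotheses (e_sym : symmetric e) (e_irr : irreflexive e).

Local Notation N := (closed_nbhd e).
Local Notation D := (max_degree e).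

Lemma closed_nbhdE u v : (u \in N v) = (u == v) || e v u.
Proof. by rewrite inE. Qed.

Lemma closed_nbhdC u v : (u \in N v) = (v \in N u).
Proof. by rewrite !closed_nbhdE eq_sym e_sym. Qed.

Lemma closed_nbhd_id v : v \in N v.
Proof. by rewrite closed_nbhdE eqxx. Qed.

Lemma closed_nbhd_edge u v : e u v -> v \in N u.
Proof. by rewrite closed_nbhdE => ->; rewrite orbT. Qed.

Lemma connect_nbhd u v : v \in N u -> connect e u v.
Proof. by rewrite closed_nbhdE => /orP [/eqP -> | /connect1]. Qed.

Lemma walk_within_nbhd a b : b \in N a -> walk_within e 1 a b.
Proof.
by rewrite closed_nbhdE => /orP [/eqP -> | /walk_within1 //]; exists [::].
Qed.

Lemma card_closed_nbhd v : #|N v| <= D.+1.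
Proof.
rewrite (_ : N v = v |: [set w | e v w]); last by apply/setP => w; rewrite !inE.
by rewrite cardsU1 -add1n leq_add ?leq_b1 // (leq_bigmax v).
Qed.

Lemma card_closed_nbhdI_gt1 a b : e a b -> 1 < #|N a :&: N b|.
Proof.
move=> ab; apply/card_gt1P; exists a, b.
rewrite !inE !eqxx ab e_sym ab !orbT; split=> //.
by apply: contraTneq ab => ->; rewrite e_irr.
Qed.

Lemma card_closed_nbhdU2 a b : e a b -> #|N a :|: N b| <= 2 * D.
Proof.
move=> ab; have := card_closed_nbhdI_gt1 ab.
have := card_closed_nbhd a; have := card_closed_nbhd b; rewrite cardsU; lia.
Qed.

Lemma card_closed_nbhdU3 a b c : e a b -> e b c -> #|N a :|: N b :|: N c| <= 3 * D - 1.
Proof.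
move=> ab bc; rewrite cardsU.
have : 1 < #|(N a :|: N b) :&: N c|.
  by apply: leq_trans (card_closed_nbhdI_gt1 bc) (subset_leq_card (setSI _ (subsetUr _ _))).
have := card_closed_nbhdU2 ab; have := card_closed_nbhd c; lia.
Qed.

Definition avoid_rel (S : {set V}) := [rel a b | [&& e a b, a \notin S & b \notin S]].

Definition avoiding (S : {set V}) a b :=
  [&& a \notin S, b \notin S & connect (avoid_rel S) a b].

Lemma avoidingP S a b : reflect (path_avoiding e S a b) (avoiding S a b).
Proof. by apply: (iffP and3P) => [[]|[? []]]. Qed.

Lemma avoiding_refl (S : {set V}) a : a \notin S -> avoiding S a a.
Proof. by move=> aS; rewrite /avoiding aS connect0. Qed.

Lemma connect_avoiding (S : {set V}) a b :
  a \notin S -> connect (avoid_rel S) a b -> avoiding S a b.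
Proof.
move=> aS ab; rewrite /avoiding aS ab andbT.
case/connectP: ab => q + ->; elim/last_ind: q => // q c _.
by rewrite rcons_path last_rcons => /andP [_ /and3P []].
Qed.

Lemma avoiding_sym S a b : avoiding S a b = avoiding S b a.
Proof.
suff avoid_sym : connect_sym (avoid_rel S) by rewrite /avoiding avoid_sym andbCA.
by apply: sym_connect_sym => u v /=; rewrite e_sym (andbC (u \notin S)).
Qed.

Lemma avoiding_trans S a b c : avoiding S a b -> avoiding S b c -> avoiding S a c.
Proof.
case/and3P => aS _ ab /and3P [_ cS bc].
by rewrite /avoiding aS cS (connect_trans ab bc).
Qed.

Lemma avoiding_nbhd (S : {set V}) a b :
  a \notin S -> b \notin S -> b \in N a -> avoiding S a b.
Proof.
move=> aS bS; rewrite closed_nbhdE => /orP [/eqP -> | ab]; first exact: avoiding_refl.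
by rewrite /avoiding aS bS connect1 //= ab aS.
Qed.

Lemma avoiding_nbhd2 (S : {set V}) a b c : a \notin S -> b \notin S -> c \notin S ->
  b \in N a -> c \in N b -> avoiding S a c.
Proof.
move=> aS bS cS ab bc.
exact: avoiding_trans (avoiding_nbhd aS bS ab) (avoiding_nbhd bS cS bc).
Qed.

Lemma avoiding_connect S a b : avoiding S a b -> connect e a b.
Proof.
case/and3P => _ _; apply: connect_sub => u v /andP [uv _].
exact: connect1.
Qed.

Lemma avoiding_path (S : {set V}) x p :
  path e x p -> all [pred u | u \notin S] (x :: p) -> avoiding S x (last x p).
Proof.
move=> xp p_out; have S' u : u \in x :: p -> u \notin S := allP p_out u.
rewrite /avoiding S' ?S' ?mem_head ?mem_last //=.
apply/connectP; exists p => //; apply: sub_in_path p_out xp => u v.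
by rewrite !inE /= => -> -> ->.
Qed.

Lemma avoiding_transfer x y v w :
  avoiding (N x) y v -> ~~ avoiding (N x) y w -> w \notin N x -> avoiding (N w) y v.
Proof.
move=> yv yw wx.
(* The component of y in G - N[x] does not contain w, so it misses N[w]. *)
have off_w u : avoiding (N x) y u -> u \notin N w.
  move=> yu; have /and3P [_ ux _] := yu.
  rewrite closed_nbhdE negb_or; apply/andP; split; first by apply: contraNneq yw => <-.
  apply: contraNN yw => wu; apply: (avoiding_trans yu (avoiding_nbhd ux wx _)).
  by rewrite closed_nbhdC closed_nbhd_edge.
have /and3P [yx _ /connectP [q yq ->]] := yv; apply: avoiding_path.
  by apply: sub_path yq => a b /andP [].
by apply/allP => u /(path_connect yq) /(connect_avoiding yx) /off_w.
Qed.

Definition component_avoiding a b := [set v | avoiding (N a) b v].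

Lemma component_avoiding_eq a b c :
  avoiding (N a) b c -> component_avoiding a b = component_avoiding a c.
Proof.
move=> bc; apply/setP => v; rewrite !inE.
apply/idP/idP; apply: avoiding_trans => //; by rewrite avoiding_sym.
Qed.

Section ATFree.
Hypothesis e_AT_free : AT_free e.

Lemma no_asteroidal_triple a b c : b \notin N a -> c \notin N a -> c \notin N b ->
  avoiding (N c) a b -> avoiding (N a) b c -> avoiding (N b) a c -> False.
Proof.
rewrite !closed_nbhdE !negb_or => /andP [ba ab] /andP [ca ac] /andP [cb bc] abc bca acb.
apply: (e_AT_free (x := a) (y := b) (z := c)).
by split; [split; rewrite 1?eq_sym // e_sym | apply/avoidingP ..].
Qed.

Lemma component_avoiding_grow_far x y w :
  y \notin N x -> w \notin N x -> w \notin N y ->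
  avoiding (N w) x y -> avoiding (N x) y w ->
  component_avoiding y x \proper component_avoiding w x.
Proof.
move=> yx wx wy xy yw.
have xw : ~~ avoiding (N y) x w by apply/negP; apply: no_asteroidal_triple xy yw.
apply/properP; split.
  by apply/subsetP => v; rewrite !inE => xv; apply: avoiding_transfer xv xw wy.
by exists y; rewrite !inE // /avoiding closed_nbhd_id andbF.
Qed.

Lemma component_avoiding_grow_near x y w :
  w \notin N x -> avoiding (N w) x y -> ~~ avoiding (N x) y w ->
  component_avoiding x y \proper component_avoiding w x.
Proof.
move=> wx xy yw; apply/properP; split.
  apply/subsetP => v; rewrite !inE => yv.
  exact: avoiding_trans xy (avoiding_transfer yv yw wx).
exists x; last by rewrite inE /avoiding closed_nbhd_id /= andbF.
by rewrite inE avoiding_refl //; case/and3P: xy.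
Qed.

Lemma exists_dominating_pair r : exists x y,
  [/\ connect e r x, connect e r y & forall w, connect e r w -> ~~ avoiding (N w) x y].
Proof.
(* Maximize the component of y0 in G - N[x], then, inside it, the component of
   x in G - N[y]: a vertex w with an x-y path avoiding N[w] would strictly
   enlarge one of the two. *)
pose far (ab : V * V) := [&& connect e r ab.1, connect e r ab.2 & ab.2 \notin N ab.1].
case: (pickP far) => [ab0 far_ab0 | near_all]; last first.
  exists r, r; split; rewrite ?connect0 // => w r_w.
  move: (near_all (r, w)); rewrite /far /= connect0 r_w => /negbFE w_r.
  by rewrite /avoiding closed_nbhdC w_r.
case: (arg_maxnP (fun ab => #|component_avoiding ab.1 ab.2|) far_ab0).
move=> [x y0] /and3P [/= r_x r_y0 y0x] x_max.
have y0y0 : avoiding (N x) y0 y0 by rewrite avoiding_refl.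
case: (arg_maxnP (fun y => #|component_avoiding y x|) y0y0) => y y0y y_max.
have r_y : connect e r y := connect_trans r_y0 (avoiding_connect y0y).
exists x, y; split=> // w r_w; apply/negP => xy.
have /and3P [] := xy; rewrite closed_nbhdC (closed_nbhdC y) => wx wy _.
have /and3P [_ yx _] := y0y.
case y_w: (avoiding (N x) y w).
- apply/negP: (y_max w (avoiding_trans y0y y_w)); rewrite -ltnNge.
  exact/proper_card/component_avoiding_grow_far.
- have far_wx : far (w, x) by rewrite /far /= r_w r_x closed_nbhdC.
  apply/negP: (x_max _ far_wx); rewrite -ltnNge /= (component_avoiding_eq y0y).
  by apply/proper_card/component_avoiding_grow_near; rewrite // y_w.
Qed.

Lemma exists_dominating_path r : exists x p,
  [/\ connect e r x, path e x p, shortest e x p &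
       forall w, connect e r w -> has [pred u | u \in N w] (x :: p)].
Proof.
have [x [y [r_x r_y xy_dom]]] := exists_dominating_pair r.
have x_y : connect e x y.
  by apply: connect_trans r_y; rewrite (sym_connect_sym e_sym).
have [p [xp p_last p_min]] := shortest_path_exists x_y.
exists x, p; split=> // w r_w; apply: contraNT (xy_dom w r_w) => p_off.
by rewrite -p_last; apply: avoiding_path; rewrite // all_predC.
Qed.

End ATFree.

Section Bags.
Variables (x : V) (p : seq V).

Local Notation s j := (nth x (x :: p) j).

(* Empty past the end of the path, so that bag i is empty for i > size p. *)
Definition nbhd_at j := if j <= size p then N (s j) else set0.

Definition bag i := nbhd_at i :|: nbhd_at i.+1 :|: nbhd_at i.+2.

Lemma mem_nbhd_at v j : (v \in nbhd_at j) = (j <= size p) && (v \in N (s j)).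
Proof. by rewrite /nbhd_at; case: ifP; rewrite ?inE. Qed.

Lemma bagP v i :
  reflect (exists j, [/\ i <= j <= i.+2, j <= size p & v \in N (s j)]) (v \in bag i).
Proof.
rewrite /bag !in_setU !mem_nbhd_at; apply: (iffP idP).
  by case/orP => [/orP [] | ] /andP [le_jp v_j];
    [exists i | exists i.+1 | exists i.+2]; split=> //; lia.
case=> j [/andP [le_ij le_ji] le_jp v_j].
have [<- | ne_ji] := eqVneq j i; first by rewrite le_jp v_j.
have [<- | ne_ji1] := eqVneq j i.+1; first by rewrite le_jp v_j orbT.
by rewrite (_ : i.+2 = j) ?le_jp ?v_j ?orbT //; lia.
Qed.

Lemma mem_bag v i j : i <= j <= i.+2 -> j <= size p -> v \in N (s j) -> v \in bag i.
Proof. by move=> le_ij le_jp v_j; apply/bagP; exists j. Qed.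

Lemma bag_le_size v i : v \in bag i -> i <= size p.
Proof. by case/bagP => j [/andP [le_ij _] le_jp _]; apply: leq_trans le_jp. Qed.

Lemma nth_bags i : nth set0 (mkseq bag (size p).+1) i = bag i.
Proof.
have [lt_i | le_i] := ltnP i (size p).+1; first by rewrite nth_mkseq.
rewrite nth_default ?size_mkseq //; apply/setP => v; rewrite inE.
by apply/esym/negbTE/negP => /bag_le_size; lia.
Qed.

Section ShortestPath.
Hypotheses (x_p : path e x p) (p_min : shortest e x p).

Lemma path_step j : j < size p -> e (s j) (s j.+1).
Proof. exact: (pathP x x_p). Qed.

Lemma common_nbhd_near v i j : i <= size p -> j <= size p ->
  v \in N (s i) -> v \in N (s j) -> j <= i + 2.
Proof.
move=> le_ip le_jp v_i v_j; apply: (shortest_geodesic x_p p_min) => //.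
apply: (walk_within_trans (b := v) (L1 := 1) (L2 := 1));
  by apply: walk_within_nbhd; rewrite // closed_nbhdC.
Qed.

Lemma path_nonadjacent a b : a <= size p -> b <= size p -> a.+1 < b -> s b \notin N (s a).
Proof.
move=> le_ap le_bp lt_ab; apply: contraTN lt_ab => /walk_within_nbhd ab.
by rewrite -leqNgt -addn1 (shortest_geodesic x_p p_min).
Qed.

Lemma edge_nbhd_near u v i j : e u v -> i <= size p -> j <= size p ->
  u \in N (s i) -> v \in N (s j) -> j <= i + 3.
Proof.
move=> uv le_ip le_jp u_i v_j; apply: (shortest_geodesic x_p p_min) => //.
apply: (walk_within_trans (b := v) (L1 := 2) (L2 := 1)).
  apply: (walk_within_trans (b := u) (L1 := 1) (L2 := 1)); first exact: walk_within_nbhd.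
  exact: walk_within1.
by apply: walk_within_nbhd; rewrite closed_nbhdC.
Qed.

Lemma bag_convex v a b c : a <= b <= c -> v \in bag a -> v \in bag c -> v \in bag b.
Proof.
move=> /andP [le_ab le_bc] /bagP [j1 [le_a1 le_1p v_1]] /bagP [j2 [le_c2 le_2p v_2]].
have := common_nbhd_near le_1p le_2p v_1 v_2 => near12.
have [le_b1 | lt_1b] := leqP b j1; first by apply: (mem_bag (j := j1)) => //; lia.
by apply: (mem_bag (j := j2)) => //; lia.
Qed.

Lemma card_bag i : 0 < D -> #|bag i| <= 3 * D - 1.
Proof.
move=> D_gt0; rewrite /bag /nbhd_at.
have [le_2p | lt_p2] := leqP i.+2 (size p).
  rewrite (ltnW le_2p) (ltnW (ltnW le_2p)).
  by apply: card_closed_nbhdU3; apply: path_step; lia.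
rewrite setU0; have [le_1p | lt_p1] := leqP i.+1 (size p).
  rewrite (ltnW le_1p); apply: leq_trans (card_closed_nbhdU2 (path_step le_1p)) _; lia.
rewrite setU0.
case: ifP => _; last by rewrite cards0.
by apply: leq_trans (card_closed_nbhd _) _; lia.
Qed.

Hypothesis e_AT_free : AT_free e.

Lemma edge_in_bag_gap3 u v i : e u v -> i.+3 <= size p ->
  u \in N (s i) -> v \in N (s i.+3) -> exists m, (u \in bag m) && (v \in bag m).
Proof.
move=> uv le_3p u_0 v_3.
have [le_0p le_1p le_2p] : [/\ i <= size p, i.+1 <= size p & i.+2 <= size p] by split; lia.
have [v_near | v_far] := boolP [|| v \in N (s i), v \in N (s i.+1) | v \in N (s i.+2)].
  have u_bag : u \in bag i by apply: (mem_bag (j := i)) => //; lia.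
  exists i; rewrite u_bag.
  by case/or3P: v_near => v_j; apply: mem_bag v_j; rewrite //; lia.
have [u_near | u_far] := boolP ((u \in N (s i.+1)) || (u \in N (s i.+2))).
  have v_bag : v \in bag i.+1 by apply: (mem_bag (j := i.+3)) => //; lia.
  exists i.+1; rewrite v_bag andbT.
  by case/orP: u_near => u_j; apply: mem_bag u_j; rewrite //; lia.
(* Otherwise s_i, s_(i+2), v is an asteroidal triple, linked through s_(i+1),
   s_(i+3) and u. *)
exfalso; move: v_far u_far; rewrite !negb_or => /and3P [v0 v1 v2] /andP [u1 u2].
have s20 : s i.+2 \notin N (s i) by apply: path_nonadjacent.
have s30 : s i.+3 \notin N (s i) by apply: path_nonadjacent; rewrite // ltnS.
apply: (@no_asteroidal_triple e_AT_free (s i) (s i.+2) v) => //.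
- rewrite closed_nbhdC in v0; rewrite closed_nbhdC in v1; rewrite closed_nbhdC in v2.
  by apply: (avoiding_nbhd2 (b := s i.+1)) => //; apply/closed_nbhd_edge/path_step.
- by apply: (avoiding_nbhd2 (b := s i.+3)) => //; apply/closed_nbhd_edge/path_step.
- rewrite closed_nbhdC in s20.
  by apply: (avoiding_nbhd2 (b := u)) => //; apply: closed_nbhd_edge.
Qed.

Lemma edge_in_bag u v i j : e u v -> i <= size p -> j <= size p ->
  u \in N (s i) -> v \in N (s j) -> exists m, (u \in bag m) && (v \in bag m).
Proof.
wlog le_ij : u v i j / i <= j.
  move=> IH uv le_ip le_jp u_i v_j; have [le_ij | /ltnW le_ji] := leqP i j.
    exact: IH uv le_ip le_jp u_i v_j.
  rewrite e_sym in uv; have [m uv_m] := IH v u j i le_ji uv le_jp le_ip v_j u_i.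
  by exists m; rewrite andbC.
move=> uv le_ip le_jp u_i v_j.
have near_ij := edge_nbhd_near uv le_ip le_jp u_i v_j.
have [le_j2 | gt_j2] := leqP j i.+2.
  by exists i; rewrite (mem_bag (j := i)) ?(mem_bag (j := j)) //=; lia.
have def_j : j = i.+3 by lia.
by subst j; apply: edge_in_bag_gap3 uv le_jp u_i v_j.
Qed.

End ShortestPath.
End Bags.

Lemma path_decomposition_component (e_AT_free : AT_free e) r : 0 < D ->
  exists bs, path_decomposition e [set v | connect e r v] (3 * D - 1) bs.
Proof.
move=> D_gt0; have [x [p [r_x x_p p_min p_dom]]] := exists_dominating_path e_AT_free r.
have dom w : connect e r w -> exists2 j, j <= size p & w \in N (nth x (x :: p) j).
  by move=> /p_dom /(has_nthP x) [j lt_j w_j]; exists j; rewrite // closed_nbhdC.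
exists (mkseq (bag x p) (size p).+1); split=> [i | w | u v | v a b c | i]; rewrite ?nth_bags.
- apply/subsetP => v /bagP [j [_ le_jp v_j]]; rewrite inE.
  apply: connect_trans r_x (connect_trans (path_connect x_p (mem_nth x _)) (connect_nbhd v_j)).
  by rewrite ltnS.
- rewrite inE => /dom [j le_jp w_j]; exists j; rewrite ?size_mkseq ?nth_bags //.
  by apply: (mem_bag (j := j)) => //; lia.
- rewrite inE => r_u uv; have r_v := connect_trans r_u (connect1 uv).
  have [[i le_ip u_i] [j le_jp v_j]] := (dom u r_u, dom v r_v).
  have [m /andP [u_m v_m]] := edge_in_bag x_p p_min e_AT_free uv le_ip le_jp u_i v_j.
  by exists m; rewrite ?size_mkseq ?nth_bags ?u_m // ltnS (bag_le_size u_m).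
- exact: bag_convex.
- exact: card_bag.
Qed.

End SimpleGraphs.

Theorem lemma12 (V : finType) (e : rel V) :
  simple_graph e -> AT_free e -> 0 < max_degree e ->
  treewidth_le e (3 * max_degree e - 2).
Proof.
move=> [e_sym e_irr] e_AT D_gt0.
have [bs pd] := path_decomposition_components (sym_connect_sym e_sym)
  (fun r => path_decomposition_component e_sym e_irr e_AT r D_gt0).
have [v _] : exists v : V, true.
  case: (pickP (fun v : V => true)) => [v _ | V0]; first by exists v.
  by move: D_gt0; rewrite /max_degree big_pred0.
have bs_gt0 : 0 < size bs.
  by have [_ /(_ v (in_setT v)) [i lt_i _] _ _ _] := pd; apply: leq_ltn_trans lt_i.
rewrite (_ : 3 * _ - 2 = 3 * max_degree e - 1 - 1); last lia.
exact: path_decomposition_treewidth bs_gt0 pd.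
Qed.
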